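(* Let $f:\mathbb R^n\to\mathbb R\cup\{+\infty\}$, $g:\mathbb R^m\to\mathbb R\cup\{+\infty\}$, $h:\mathbb R^n\to\mathbb R\cup\{+\infty\}$ be closed convex functions, where $h$ is differentiable on its domain $\operatorname{dom} h$, which is an open convex set, and $f+h$ and $g$ are proper. Let $A\in\mathbb R^{m\times n}$. Let $X\subseteq\mathbb R^n$ and $Z\subseteq\mathbb R^m$ be compact convex sets, and suppose the primal problem $\text{minimize } f(x)+g(Ax)+h(x)$ has an optimal solution $x^\star\in\operatorname{int}(X)$ and the dual problem $\text{maximize } -(f+h)^*(-A^Tz)-g^*(z)$ has an optimal solution $z^\star\in\operatorname{int}(Z)$. Define, for $x\in\operatorname{dom}(f+h)$ and $z\in\operatorname{dom} g^*$, \[\eta(x,z)=\sup_{z'\in Z}\mathcal L(x,z')-\inf_{x'\in X}\mathcal L(x',z).\] Then $\eta(x,z)\ge 0$ for all $x\in\operatorname{dom}(f+h)$ and $z\in\operatorname{dom} g^*$, and $\eta(x,z)=0$ only if $x$ is optimal for the primal problem and $z$ is optimal for the dual problem.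
   Context: $g^*$ and $(f+h)^*$ denote convex conjugates. The Lagrangian is $\mathcal L(x,z)=f(x)+h(x)+\langle z,Ax\rangle-g^*(z)$, with the convention $\mathcal L(x,z)=+\infty$ if $x\notin\operatorname{dom}(f+h)$ and $\mathcal L(x,z)=-\infty$ if $x\in\operatorname{dom}(f+h)$ and $z\notin\operatorname{dom} g^*$. It is a standing assumption that the primal--dual optimality conditions $0\in\partial f(x)+\nabla h(x)+A^Tz$, $0\in\partial g^*(z)-Ax$ have a solution. *)

From HB Require Import structures.
From mathcomp Require Import all_boot all_order all_algebra.
From mathcomp Require Import all_classical all_reals all_analysis.
Set Implicit Arguments. Unset Strict Implicit. Unset Printing Implicit Defensive.
Import Order.TTheory GRing.Theory Num.Theory.
Import numFieldNormedType.Exports.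
Local Open Scope classical_set_scope.
Local Open Scope ring_scope.

Section Defs.
Variable R : realType.

Definition dotv k (u v : 'cV[R]_k) : R := \sum_(i < k) u i 0 * v i 0.

Definition edom k (F : 'cV[R]_k -> \bar R) : set 'cV[R]_k :=
  [set x | (F x < +oo)%E].

Definition convex_setv k (S : set 'cV[R]_k) : Prop :=
  forall x y (t : R), S x -> S y -> 0 <= t <= 1 -> S (t *: x + (1 - t) *: y).

(* convex extended-real-valued function: convex epigraph *)
Definition econvex k (F : 'cV[R]_k -> \bar R) : Prop :=
  forall x y (a b t : R), (F x <= a%:E)%E -> (F y <= b%:E)%E -> 0 <= t <= 1 ->
    (F (t *: x + (1 - t) *: y)%R <= (t * a + (1 - t) * b)%:E)%E.

(* closed function: closed epigraph, i.e. all sublevel sets closed (lsc) *)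
Definition eclosed k (F : 'cV[R]_k -> \bar R) : Prop :=
  forall a : R, closed [set x | (F x <= a%:E)%E].

Definition eproper k (F : 'cV[R]_k -> \bar R) : Prop :=
  (forall x, (-oo < F x)%E) /\ exists x, (F x < +oo)%E.

Definition conj k (F : 'cV[R]_k -> \bar R) (y : 'cV[R]_k) : \bar R :=
  ereal_sup [set ((dotv y x)%:E - F x)%E | x in [set: 'cV[R]_k]].

Definition subgrad k (F : 'cV[R]_k -> \bar R) (x v : 'cV[R]_k) : Prop :=
  F x \is a fin_num /\ forall y, (F x + (dotv v (y - x)%R)%:E <= F y)%E.

Definition is_gradient k (F : 'cV[R]_k -> \bar R) (x gr : 'cV[R]_k) : Prop :=
  edom F x /\ differentiable (fun y => fine (F y)) x /\
  forall u, 'd (fun y => fine (F y)) x u = dotv gr u.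

Variables (n m : nat) (f h : 'cV[R]_n -> \bar R) (g : 'cV[R]_m -> \bar R)
  (A : 'M[R]_(m, n)).

Definition fph (x : 'cV[R]_n) : \bar R := (f x + h x)%E.

Definition primal_obj (x : 'cV[R]_n) : \bar R := (f x + g (A *m x) + h x)%E.
Definition dual_obj (z : 'cV[R]_m) : \bar R :=
  (- conj fph (- (A^T *m z)) - conj g z)%E.

Definition primal_optimal (x : 'cV[R]_n) : Prop :=
  forall x', (primal_obj x <= primal_obj x')%E.
Definition dual_optimal (z : 'cV[R]_m) : Prop :=
  forall z', (dual_obj z' <= dual_obj z)%E.

Definition lagr (x : 'cV[R]_n) (z : 'cV[R]_m) : \bar R :=
  if `[< edom fph x >] then
    if `[< edom (conj g) z >] then
      (f x + h x + (dotv z (A *m x))%:E - conj g z)%E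
    else -oo%E
  else +oo%E.

Definition pdgap (X : set 'cV[R]_n) (Z : set 'cV[R]_m) x z : \bar R :=
  (ereal_sup [set lagr x z' | z' in Z] - ereal_inf [set lagr x' z | x' in X])%E.

End Defs.

From HB Require Import structures.
From mathcomp Require Import all_boot all_order all_algebra.
From mathcomp Require Import all_classical all_reals all_analysis.
From mathcomp Require Import ring lra.
Import Order.TTheory GRing.Theory Num.Theory.
Import numFieldNormedType.Exports.
Local Open Scope classical_set_scope.
Local Open Scope ring_scope.
Set Implicit Arguments. Unset Strict Implicit. Unset Printing Implicit Defensive.

(* At a solution (x0, z0) of the optimality conditions, the subgradient
   inequalities for f, h and g^* say that (x0, z0) is a saddle point of the
   Lagrangian L.  Since g is closed and convex, sup_z L(x, z) is the primal
   objective P(x) (a Fenchel-Moreau argument, run through a proximal point of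
   the epigraph of g), while inf_x L(x, z) is the dual objective D(z) by the
   definition of (f + h)^*.  Hence P(x0) <= L(x0, z0) <= D(z0): strong duality
   holds, and any primal and dual optima (xs, zs) form a saddle point with
   value p*.  Then sup_Z L(x, .) >= L(x, zs) >= p* >= L(xs, z) >= inf_X L(., z),
   so the gap is nonnegative.  If it vanishes, L(x, .) <= p* on Z with equality
   at the interior point zs, and concavity of L(x, .) along segments through zs
   gives L(x, .) <= p* everywhere, i.e. P(x) <= p*; symmetrically D(z) >= p*. *)

Section InnerProduct.
Variables (R : realType) (k : nat).
Implicit Types u v w : 'cV[R]_k.

Lemma dotvC u v : dotv u v = dotv v u.
Proof. by apply: eq_bigr => i _; rewrite mulrC. Qed.

Lemma dotvDl u v w : dotv (u + v) w = dotv u w + dotv v w.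
Proof. by rewrite /dotv -big_split; apply: eq_bigr => i _; rewrite !mxE mulrDl. Qed.

Lemma dotvDr u v w : dotv w (u + v) = dotv w u + dotv w v.
Proof. by rewrite dotvC dotvDl !(dotvC w). Qed.

Lemma dotvZl a u v : dotv (a *: u) v = a * dotv u v.
Proof. by rewrite /dotv big_distrr; apply: eq_bigr => i _; rewrite !mxE -mulrA. Qed.

Lemma dotvZr a u v : dotv v (a *: u) = a * dotv v u.
Proof. by rewrite dotvC dotvZl dotvC. Qed.

Lemma dotvNl u v : dotv (- u) v = - dotv u v.
Proof. by rewrite -scaleN1r dotvZl mulN1r. Qed.

Lemma dotvNr u v : dotv v (- u) = - dotv v u.
Proof. by rewrite dotvC dotvNl dotvC. Qed.

Lemma dotvBr u v w : dotv w (u - v) = dotv w u - dotv w v.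
Proof. by rewrite dotvDr dotvNr. Qed.

Lemma dotvvN u : dotv (- u) (- u) = dotv u u.
Proof. by rewrite dotvNl dotvNr opprK. Qed.

Lemma dotvv_ge0 u : 0 <= dotv u u.
Proof. by apply: sumr_ge0 => i _; rewrite -expr2 sqr_ge0. Qed.

Lemma sqr_coord_le_dotvv u i : u i 0 ^+ 2 <= dotv u u.
Proof.
rewrite /dotv (bigD1 i) //= expr2 lerDl.
by apply: sumr_ge0 => j _; rewrite -expr2 sqr_ge0.
Qed.

Lemma dotvvD u v : dotv (u + v) (u + v) = dotv u u + 2 * dotv u v + dotv v v.
Proof. by rewrite !dotvDl !dotvDr (dotvC v u); ring. Qed.

Lemma dotv_geN_mean u v : - ((dotv u u + dotv v v) / 2) <= dotv u v.
Proof. by have := dotvv_ge0 (u + v); rewrite dotvvD; lra. Qed.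

Lemma dotvv_continuous : continuous (fun u => dotv u u).
Proof.
have -> : (fun u => dotv u u) = \sum_(i < k) (fun u : 'cV[R]_k => u i 0 * u i 0).
  by apply/funext => u; rewrite /dotv fct_sumE.
elim/big_ind: _ => [|f1 f2 f1c f2c u|i _ u].
- exact: cst_continuous.
- exact: continuousD (f1c u) (f2c u).
- by apply: continuousM; exact: coord_continuous.
Qed.

End InnerProduct.

Lemma dotv_mulmx (R : realType) k l (A : 'M[R]_(k, l)) z x :
  dotv z (A *m x) = dotv (A^T *m z) x.
Proof.
rewrite /dotv.
under eq_bigr do rewrite mxE big_distrr.
under [RHS]eq_bigr do rewrite mxE big_distrl.
rewrite exchange_big /=; apply: eq_bigr => i _; apply: eq_bigr => j _.
by rewrite !mxE mulrCA mulrA.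
Qed.

Lemma mx_norm_trmx_le (R : realType) p q (M : 'M[R]_(p, q)) : `|M^T| <= `|M|.
Proof.
rewrite [leLHS]/Num.norm /= mx_normrE; apply/bigmax_leP; split=> [|[i j] _].
  exact: normr_ge0.
rewrite mxE [leRHS]/Num.norm /= mx_normrE.
exact: (le_bigmax _ (fun ij : 'I_p * 'I_q => `|M ij.1 ij.2|) (j, i)).
Qed.

Lemma trmx_continuous (R : realType) p q : continuous (@trmx R p q).
Proof.
move=> M B /nbhs_ballP[e e0 MeB]; apply/nbhs_ballP; exists e => // N.
rewrite -!ball_normE /= => MN; apply: MeB; rewrite -ball_normE /= -linearB.
exact: le_lt_trans (mx_norm_trmx_le _) MN.
Qed.

Lemma cV_compact (R : realType) k (B : 'I_k -> set R) :
  (forall i, compact (B i)) -> compact [set v : 'cV[R]_k | forall i, B i (v i 0)].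
Proof.
move=> /rV_compact /(continuous_compact (continuous_subspaceT (@trmx_continuous R 1 k))).
congr compact; apply/seteqP; split=> [_ [v Bv <-] i|v Bv]; first by rewrite mxE.
by exists v^T; [move=> i; rewrite mxE | exact: trmxK].
Qed.

Lemma sqr_mx_norm_le_dotvv (R : realType) k (u : 'cV[R]_k) : `|u| ^+ 2 <= dotv u u.
Proof.
rewrite [`|u|]/Num.norm /=.
have [->|/mx_norm_neq0[[i j] ->]] := eqVneq (mx_norm u) 0.
  by rewrite expr0n dotvv_ge0.
by rewrite (ord1 j) real_normK ?num_real // sqr_coord_le_dotvv.
Qed.

Section Semicontinuity.
Variable R : realType.

Lemma eclosed_lsc k (F : 'cV[R]_k -> \bar R) : eclosed F -> lower_semicontinuous F.
Proof.
move=> Fcl; apply/lower_semicontinuousP => a.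
rewrite (_ : [set x | _] = ~` [set x | (F x <= a%:E)%E]); first by rewrite openC.
by apply/seteqP; split => x /=; rewrite ltNge => /negP.
Qed.

Lemma lsc_closed_epigraph (T : topologicalType) (F : T -> \bar R) :
  lower_semicontinuous F -> closed [set p : T * R | (F p.1 <= p.2%:E)%E].
Proof.
move=> Flsc; rewrite -openC openE => -[w s] /= /negP; rewrite -ltNge => sFw.
have [a sa aFw] : exists2 a, s < a & (a%:E < F w)%E.
  case: (F w) sFw => [r| |] //= sr; last by exists (s + 1); [lra | exact: ltry].
  by exists ((s + r) / 2); rewrite ?lte_fin; move: sr; rewrite lte_fin; lra.
have [V wV aFV] := Flsc w a aFw.
have sV : nbhs s [set t : R | t < a].
  apply/nbhs_ballP; exists (a - s); first by rewrite /= subr_gt0.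
  by move=> t; rewrite -ball_normE /= => /ltr_distlCDr; lra.
exists (V, [set t : R | t < a]) => // -[w' t] /= [/aFV aFw' ta].
apply/negP; rewrite -ltNge; apply: lt_trans aFw'; by rewrite lte_fin.
Qed.

End Semicontinuity.

Lemma ge0_of_linear_perturbation (R : realType) (a c : R) : 0 <= c ->
  (forall t, 0 < t -> t <= 1 -> 0 <= a + t * c) -> 0 <= a.
Proof.
move=> c0 H; rewrite leNgt; apply/negP => a0.
pose t := - a / (- a + 2 * (c + 1)).
have den : 0 < - a + 2 * (c + 1) by lra.
have tE : t * (- a + 2 * (c + 1)) = - a by rewrite /t divfK // gt_eqF.
have t0 : 0 < t by rewrite /t divr_gt0 //; lra.
have t1 : t <= 1 by rewrite /t ler_pdivrMr // mul1r; lra.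
have := H t t0 t1; nra.
Qed.

Section ConvexAnalysis.
Variables (R : realType) (k : nat).
Implicit Types (F : 'cV[R]_k -> \bar R) (x y z w : 'cV[R]_k).

Lemma fenchel_young F z w : ((dotv z w)%:E - F w <= conj F z)%E.
Proof. by apply: ereal_sup_ubound; exists w. Qed.

Lemma conj_gtNy F w z : (F w < +oo)%E -> (-oo < conj F z)%E.
Proof.
move=> Fw; apply: lt_le_trans (fenchel_young F z w).
by case: (F w) Fw => [r| |] //= _; rewrite -EFinB ltNyr.
Qed.

Lemma conj_minorant F z (c : R) :
  (conj F z <= c%:E)%E -> forall w, ((dotv z w - c)%:E <= F w)%E.
Proof.
move=> Fzc w; have := le_trans (fenchel_young F z w) Fzc.
by case: (F w) => [r| |] //=; rewrite ?leey // -EFinB !lee_fin; lra.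
Qed.

Lemma conj_econvex F : econvex (conj F).
Proof.
move=> z1 z2 a b t Fz1 Fz2 /andP[t0 t1]; apply: ge_ereal_sup => _ [w _ <-].
have := le_trans (fenchel_young F z1 w) Fz1.
have := le_trans (fenchel_young F z2 w) Fz2.
case: (F w) => [r| |] //=.
  by rewrite -!EFinD !lee_fin dotvDl !dotvZl; nra.
by move=> _ _; rewrite addeNy leNye.
Qed.

Lemma nbhs_segment (S : set 'cV[R]_k) x : nbhs x S ->
  forall y, exists t : R, [/\ 0 < t, t <= 1 & S (t *: y + (1 - t) *: x)].
Proof.
move=> /nbhs_ballP[e /= e0 xeS] y.
pose t := Num.min 1 (e / (2 * (`|y - x| + 1))).
have t0 : 0 < t by rewrite lt_min ltr01 divr_gt0 //; have := normr_ge0 (y - x); lra.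
exists t; split=> //; first by rewrite ge_min lexx.
apply: xeS; rewrite -ball_normE /=.
have -> : x - (t *: y + (1 - t) *: x) = - (t *: (y - x)).
  by apply/matrixP => i j; rewrite !mxE; ring.
rewrite normrN normrZ ger0_norm ?ltW //.
have : t * (2 * (`|y - x| + 1)) <= e.
  by rewrite -ler_pdivlMr ?ge_min ?lexx ?orbT //; have := normr_ge0 (y - x); lra.
have := normr_ge0 (y - x); nra.
Qed.

Lemma convex_gradient_subgrad F x gr :
  econvex F -> (forall y, (-oo < F y)%E) -> is_gradient F x gr -> subgrad F x gr.
Proof.
move=> Fcv FgtNy [Fx [Fdiff dFE]].
have Fxfin : F x \is a fin_num by rewrite fin_numElt FgtNy.
split=> // y; rewrite -(fineK Fxfin); set a := fine (F x).
case Fy: (F y) => [b| |]; [|by rewrite leey|by have := FgtNy y; rewrite Fy].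
pose q t := t^-1 *: (fine (F (t *: (y - x) + x)) - fine (F x)).
have q_le : \forall t \near 0^'+, q t <= b - a.
  near=> t; have t0 : 0 < t by [].
  have t1 : t <= 1 by near: t; exact: nbhs_right_le ltr01.
  have : (F (t *: y + (1 - t) *: x)%R <= (t * b + (1 - t) * a)%:E)%E.
    by apply: Fcv; rewrite ?Fy ?fineK ?(ltW t0) ?t1.
  have -> : t *: y + (1 - t) *: x = t *: (y - x) + x.
    by apply/matrixP => i j; rewrite !mxE; ring.
  move: (FgtNy (t *: (y - x) + x)); rewrite /q -/a.
  case: (F _) => [u| |] //= _; rewrite lee_fin => Fu.
  rewrite [_ *: _]/GRing.scale /= ler_pdivrMl //; lra.
have dq : q x @[x --> 0^'] --> dotv gr (y - x).
  rewrite -dFE -deriveE //; exact: diff_derivable.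
rewrite -EFinD lee_fin; suff : dotv gr (y - x) <= b - a by lra.
have dq_right := cvg_dnbhs_at_right dq.
by rewrite -(cvg_lim _ dq_right) //; apply: limr_le => //; exact: cvgP dq_right.
Unshelve. all: by end_near.
Qed.

Lemma notin_edom F x : ~ edom F x -> F x = +oo%E.
Proof. by move=> /negP; rewrite /edom /= -leNgt leye_eq => /eqP. Qed.

Lemma subgrad_edom F x v : subgrad F x v -> edom F x.
Proof. by case; rewrite fin_numElt => /andP[]. Qed.

Lemma subgradD F1 F2 x v1 v2 :
  subgrad F1 x v1 -> subgrad F2 x v2 -> subgrad (fph F1 F2) x (v1 + v2).
Proof.
move=> [F1x F1sub] [F2x F2sub]; split=> [|y]; first by rewrite fin_numD F1x.
rewrite dotvDl EFinD addeACA; exact: leeD.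
Qed.

End ConvexAnalysis.

Section FenchelMoreau.
Variables (R : realType) (k : nat) (g : 'cV[R]_k -> \bar R).
Hypotheses (gcl : eclosed g) (gcv : econvex g) (g_proper : eproper g).
(* g^* finite at z0 gives g an affine minorant; a closed proper convex g always
   has one, but assuming it spares us a separation argument. *)
Variable z0 : 'cV[R]_k.
Hypothesis conj_z0 : edom (conj g) z0.

Local Notation sq u := (dotv u u).

Let c0 := fine (conj g z0).
Let ly y := dotv z0 y - c0 - sq z0 / 2.

Let g_gtNy w : (-oo < g w)%E. Proof. by case: g_proper. Qed.

Let minorant w : ((dotv z0 w - c0)%:E <= g w)%E.
Proof.
apply: conj_minorant; rewrite fineK // fin_numElt conj_z0 andbT.
by case: g_proper => _ [w1]; exact: conj_gtNy.
Qed.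

Let epigraph_ge y w s : (g w <= s%:E)%E -> ly y - sq (w - y) / 2 <= s.
Proof.
move=> gws; have := le_trans (minorant w) gws; rewrite lee_fin /ly.
have -> : dotv z0 w = dotv z0 y + dotv z0 (w - y) by rewrite dotvBr; ring.
by have := dotv_geN_mean z0 (w - y); lra.
Qed.

Lemma sublevel_bounded_away y (r : R) : (r%:E < g y)%E ->
  exists2 d : R, 0 < d & forall w, (g w <= r%:E)%E -> d ^+ 2 <= sq (w - y).
Proof.
move=> rgy; have [V yV rgV] := eclosed_lsc gcl rgy.
have /nbhs_ballP[e /= e0 yeV] := yV.
exists e => // w gwr; have : ~ ball y e w by move=> /yeV /rgV; rewrite ltNge gwr.
rewrite -ball_normE /= => /negP; rewrite -leNgt => ey.
rewrite -dotvvN opprB; apply: le_trans (sqr_mx_norm_le_dotvv _).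
by rewrite lerXn2r ?nnegrE ?(ltW e0).
Qed.

(* For c > 1/2 the minorant makes s + c |w - y|^2 coercive on the epigraph,
   so the minimisation can be restricted to a compact box. *)
Lemma epigraph_prox_exists y (c : R) : 1 / 2 < c ->
  exists wb sb, (g wb <= sb%:E)%E /\
    forall w s, (g w <= s%:E)%E -> sb + c * sq (wb - y) <= s + c * sq (w - y).
Proof.
move=> c_gt.
have [w1 gw1] : exists w1, g w1 \is a fin_num.
  by case: g_proper => _ [w1 gw1]; exists w1; rewrite fin_numElt g_gtNy.
set s1 := fine (g w1); set V1 := s1 + c * sq (w1 - y).
set rad := (V1 - ly y) / (c - 1 / 2).
pose box := [set w : 'cV[R]_k | forall i,
    `[y i 0 - (1 + rad), y i 0 + (1 + rad)]%classic (w i 0)]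
  `*` `[ly y - rad / 2, V1]%classic.
pose E := box `&` [set p : 'cV[R]_k * R | (g p.1 <= p.2%:E)%E].
have Ebox w s : (g w <= s%:E)%E -> s + c * sq (w - y) <= V1 -> E (w, s).
  move=> gws sV1; have lys := epigraph_ge y gws.
  have sq_ge0 := dotvv_ge0 (w - y).
  have sq_rad : sq (w - y) <= rad by rewrite ler_pdivlMr; [nra | lra].
  split=> //; split=> /=; last by rewrite in_itv /=; apply/andP; split; nra.
  move=> i; have := sqr_coord_le_dotvv (w - y) i; rewrite !mxE in_itv /= => wyi.
  have := sqr_ge0 (w i 0 - y i 0 - 1 / 2); have := sqr_ge0 (w i 0 - y i 0 + 1 / 2).
  by move=> ? ?; apply/andP; split; nra.
have E_compact : compact E.
  apply: compact_closedI; last exact/lsc_closed_epigraph/eclosed_lsc.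
  apply: compact_setX; last exact: segment_compact.
  apply: (cV_compact (B := fun i => `[y i 0 - (1 + rad), y i 0 + (1 + rad)]%classic)).
  by move=> i; exact: segment_compact.
have E1 : E (w1, s1) by apply: Ebox; rewrite ?fineK.
have psi_cont : continuous (fun p : 'cV[R]_k * R => p.2 + c * sq (p.1 - y)).
  have shift_cont : continuous (fun p : 'cV[R]_k * R => p.1 - y).
    by move=> p; apply: cvgD; [exact: cvg_fst | exact: cvg_cst].
  move=> p; apply: cvgD; first exact: cvg_snd.
  apply: cvgM; first exact: cvg_cst.
  exact: (continuous_comp (shift_cont p) (@dotvv_continuous R k _)).
have [[wb sb] Eb wb_min] :=
  compact_EVT_min (ex_intro _ _ E1) E_compact (continuous_subspaceT psi_cont).
rewrite inE in Eb; exists wb, sb; split; first by case: Eb.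
move=> w s gws; have [/(Ebox _ _ gws) Ew|V1lt] := lerP (s + c * sq (w - y)) V1.
  by apply: (wb_min (w, s)); rewrite inE.
by apply: le_trans (ltW V1lt); apply: (wb_min (w1, s1)); rewrite inE.
Qed.

Lemma prox_conj_le y (c : R) wb sb : 0 <= c -> (g wb <= sb%:E)%E ->
  (forall w s, (g w <= s%:E)%E -> sb + c * sq (wb - y) <= s + c * sq (w - y)) ->
  (conj g ((2 * c) *: (y - wb)) <= (dotv ((2 * c) *: (y - wb)) wb - sb)%:E)%E.
Proof.
move=> c_ge0 gwb wb_min; set kv := (2 * c) *: (y - wb).
have first_order w s : (g w <= s%:E)%E -> dotv kv w - s <= dotv kv wb - sb.
  move=> gws; suff : 0 <= (s - sb) + 2 * c * dotv (wb - y) (w - wb).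
    have : dotv kv w - dotv kv wb = - (2 * c * dotv (wb - y) (w - wb)).
      by rewrite -dotvBr dotvZl -[y - wb]opprB dotvNl; ring.
    lra.
  apply: (ge0_of_linear_perturbation (c := c * sq (w - wb))).
    by rewrite mulr_ge0 ?dotvv_ge0.
  move=> t t0 t1.
  have gwt : (g (t *: w + (1 - t) *: wb)%R <= (t * s + (1 - t) * sb)%:E)%E.
    by apply: gcv; rewrite ?(ltW t0) ?t1.
  have := wb_min _ _ gwt.
  have -> : t *: w + (1 - t) *: wb - y = (wb - y) + t *: (w - wb).
    by apply/matrixP => i j; rewrite !mxE; ring.
  rewrite (dotvvD (wb - y)) dotvZl !dotvZr -(pmulr_rge0 _ t0); nra.
apply: ge_ereal_sup => _ [w _ <-].
case gw: (g w) => [sw| |]; last by have := g_gtNy w; rewrite gw.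
  by rewrite -EFinB lee_fin first_order ?gw.
by rewrite addeNy leNye.
Qed.

Lemma fenchel_moreau_lt y (r : R) : (r%:E < g y)%E ->
  exists kv, (r%:E < (dotv kv y)%:E - conj g kv)%E.
Proof.
move=> rgy; have [d d0 far] := sublevel_bounded_away rgy.
have d2_gt0 : 0 < d ^+ 2 := exprn_gt0 _ d0.
(* Large enough that s + c |w - y|^2 > r on the whole epigraph: near y because
   g > r there, far from y because of the minorant. *)
pose c := 1 + `|r - ly y| / d ^+ 2.
have c_ge1 : 1 <= c by rewrite lerDl divr_ge0 // ltW.
have cd2 : c * d ^+ 2 = d ^+ 2 + `|r - ly y|.
  by rewrite mulrDl mul1r divfK // gt_eqF.
have [wb [sb [gwb wb_min]]] := epigraph_prox_exists y (c := c) ltac:(lra).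
have r_lt : r < sb + c * sq (wb - y).
  have := dotvv_ge0 (wb - y).
  have [q_lt|q_ge] := ltP (sq (wb - y)) (d ^+ 2).
    have : r < sb.
      rewrite -lte_fin; apply: lt_le_trans gwb.
      by rewrite ltNge; apply/negP => /far; rewrite leNgt q_lt.
    nra.
  have := epigraph_ge y gwb; have := ler_norm (r - ly y).
  have : c * d ^+ 2 <= c * sq (wb - y) by rewrite ler_pM2l //; lra.
  nra.
exists ((2 * c) *: (y - wb)).
apply: lt_le_trans (leeB (lexx _) (prox_conj_le (ltW _) gwb wb_min)); last lra.
rewrite -EFinB lte_fin.
have -> : dotv ((2 * c) *: (y - wb)) y - (dotv ((2 * c) *: (y - wb)) wb - sb) =
    sb + 2 * c * sq (wb - y).
  by rewrite !dotvZl -[in RHS]dotvvN (opprB wb y) dotvBr; ring.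
by have := dotvv_ge0 (wb - y); nra.
Qed.

End FenchelMoreau.

Section LagrangianDuality.
Variables (R : realType) (n m : nat) (f h : 'cV[R]_n -> \bar R)
  (g : 'cV[R]_m -> \bar R) (A : 'M[R]_(m, n)).
Hypotheses (fh_proper : eproper (fph f h)) (g_proper : eproper g).
Hypotheses (fcv : econvex f) (hcv : econvex h) (gcl : eclosed g) (gcv : econvex g).

Local Notation L := (lagr f h g A).
Local Notation P := (primal_obj f h g A).
Local Notation D := (dual_obj f h g A).
(* [f x + h x] rather than [fph f h x], so that rewriting with [fphE] leaves
   [F x] untouched. *)
Local Notation F x := (fine (f x + h x)%E).
Local Notation G z := (fine (conj g z)).

Let fh_gtNy x : (-oo < fph f h x)%E. Proof. by case: fh_proper. Qed.

Let h_gtNy x : (-oo < h x)%E.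
Proof.
move: (fh_gtNy x); rewrite /fph; case: (h x) => [r _|//|]; first exact: ltNyr.
by rewrite addeNy.
Qed.

Let g_gtNy w : (-oo < g w)%E. Proof. by case: g_proper. Qed.

Let conj_g_gtNy z : (-oo < conj g z)%E.
Proof. by case: g_proper => _ [w]; exact: conj_gtNy. Qed.

Let fphE x : edom (fph f h) x -> fph f h x = (F x)%:E.
Proof. by move=> xd; rewrite fineK // fin_numElt fh_gtNy. Qed.

Let conjgE z : edom (conj g) z -> conj g z = (G z)%:E.
Proof. by move=> zd; rewrite fineK // fin_numElt conj_g_gtNy. Qed.

Let primal_objE x : P x = (fph f h x + g (A *m x))%E.
Proof. by rewrite /primal_obj addeAC. Qed.

Lemma lagrE x z : edom (fph f h) x -> edom (conj g) z ->
  L x z = (F x + dotv z (A *m x) - G z)%:E.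
Proof.
by move=> xd zd; rewrite /lagr !asboolT // -/(fph f h x) fphE // conjgE.
Qed.

Lemma lagr_notin_edom_x x z : ~ edom (fph f h) x -> L x z = +oo%E.
Proof. by move=> xd; rewrite /lagr asboolF. Qed.

Lemma lagr_notin_edom_z x z : edom (fph f h) x -> ~ edom (conj g) z -> L x z = -oo%E.
Proof. by move=> xd zd; rewrite /lagr asboolT // asboolF. Qed.

Lemma lagr_fin_num_edom x z : L x z \is a fin_num ->
  edom (fph f h) x /\ edom (conj g) z.
Proof.
move=> Lfin; have xd : edom (fph f h) x.
  by apply: contrapT => xd; move: Lfin; rewrite lagr_notin_edom_x.
by split=> //; apply: contrapT => zd; move: Lfin; rewrite lagr_notin_edom_z.
Qed.

Lemma lagr_le_primal_obj x z : (L x z <= P x)%E.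
Proof.
have [xd|xd] := pselect (edom (fph f h) x); last first.
  by rewrite lagr_notin_edom_x // primal_objE (notin_edom xd) addye ?gt_eqF.
have [zd|zd] := pselect (edom (conj g) z); last first.
  by rewrite lagr_notin_edom_z // leNye.
rewrite primal_objE lagrE // fphE //.
have := fenchel_young g z (A *m x); rewrite conjgE //.
case: (g (A *m x)) (g_gtNy (A *m x)) => [s| |] //= _; last by rewrite leey.
by rewrite -EFinB -EFinD !lee_fin; lra.
Qed.

Lemma dual_obj_le_lagr x z : (D z <= L x z)%E.
Proof.
have [xd|xd] := pselect (edom (fph f h) x); last by rewrite lagr_notin_edom_x // leey.
have [zd|zd] := pselect (edom (conj g) z); last first.
  by rewrite /dual_obj (notin_edom zd) addeNy leNye.
rewrite lagrE // /dual_obj conjgE // EFinB; apply: leeB => //.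
rewrite leeNl; apply: le_trans (fenchel_young _ _ x).
by rewrite fphE // dotvNl -dotv_mulmx -EFinB -EFinN lee_fin; lra.
Qed.

Lemma dual_obj_ge_of_lagr_ge z (c : R) : edom (conj g) z ->
  (forall x, (c%:E <= L x z)%E) -> (c%:E <= D z)%E.
Proof.
move=> zd Lc; rewrite /dual_obj conjgE //.
suff : (conj (fph f h) (- (A^T *m z)) <= (- (c + G z))%:E)%E.
  case: (conj _ _) => [s| |] //=; last by move=> _; rewrite addye ?leey.
  by rewrite -EFinD !lee_fin; lra.
apply: ge_ereal_sup => _ [x _ <-].
have [xd|xd] := pselect (edom (fph f h) x); last by rewrite notin_edom // addeNy leNye.
have := Lc x; rewrite lagrE // fphE // -EFinB !lee_fin dotvNl -dotv_mulmx; lra.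
Qed.

Lemma primal_obj_le_of_lagr_le z0 x (c : R) :
  edom (conj g) z0 -> edom (fph f h) x ->
  (forall z, (L x z <= c%:E)%E) -> (P x <= c%:E)%E.
Proof.
move=> z0d xd Lc; rewrite primal_objE fphE //.
suff : (g (A *m x) <= (c - F x)%:E)%E.
  case: (g _) => [s| |] //=; last by move=> _; rewrite addeNy leNye.
  by rewrite -EFinD !lee_fin; lra.
rewrite leNgt; apply/negP => /(fenchel_moreau_lt gcl gcv g_proper z0d)[z].
have [zd|zd] := pselect (edom (conj g) z); last by rewrite (notin_edom zd) addeNy.
rewrite conjgE // -EFinB lte_fin => ltz.
by have := Lc z; rewrite lagrE // lee_fin; lra.
Qed.

Definition saddle_point x0 z0 :=
  (forall z, (L x0 z <= L x0 z0)%E) /\ (forall x, (L x0 z0 <= L x z0)%E).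

Lemma lagr_max_of_conj_subgrad x0 z0 : edom (fph f h) x0 ->
  subgrad (conj g) z0 (A *m x0) -> forall z, (L x0 z <= L x0 z0)%E.
Proof.
move=> x0d z0_sub z; have z0d := subgrad_edom z0_sub; case: z0_sub => _ z0_sub.
have [zd|zd] := pselect (edom (conj g) z); last first.
  by rewrite lagr_notin_edom_z // leNye.
have := z0_sub z; rewrite !lagrE // (conjgE zd) (conjgE z0d) /= -EFinD !lee_fin dotvBr.
by rewrite (dotvC (A *m x0) z) (dotvC (A *m x0) z0); lra.
Qed.

Lemma lagr_min_of_subgrad x0 z0 : edom (conj g) z0 ->
  subgrad (fph f h) x0 (- (A^T *m z0)) -> forall x, (L x0 z0 <= L x z0)%E.
Proof.
move=> z0d x0_sub x; have x0d := subgrad_edom x0_sub; case: x0_sub => _ x0_sub.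
have [xd|xd] := pselect (edom (fph f h) x); last first.
  by rewrite (lagr_notin_edom_x z0 xd) leey.
have := x0_sub x; rewrite !lagrE // !fphE // -EFinD !lee_fin.
by rewrite dotvNl -dotv_mulmx mulmxBr dotvBr; lra.
Qed.

Lemma kkt_saddle_point x0 z0 v gr :
  subgrad f x0 v -> is_gradient h x0 gr -> v + gr + A^T *m z0 = 0 ->
  subgrad (conj g) z0 (A *m x0) -> saddle_point x0 z0 /\ L x0 z0 \is a fin_num.
Proof.
move=> fv hgr kkt z0_sub.
have x0_sub : subgrad (fph f h) x0 (- (A^T *m z0)).
  have -> : - (A^T *m z0) = v + gr by apply/eqP; rewrite eq_sym -subr_eq0 opprK kkt.
  exact: subgradD fv (convex_gradient_subgrad hcv h_gtNy hgr).
have x0d := subgrad_edom x0_sub; have z0d := subgrad_edom z0_sub.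
split; last by rewrite lagrE.
by split; [exact: lagr_max_of_conj_subgrad | exact: lagr_min_of_subgrad].
Qed.

Lemma saddle_point_duality x0 z0 : saddle_point x0 z0 -> L x0 z0 \is a fin_num ->
  (P x0 <= L x0 z0)%E /\ (L x0 z0 <= D z0)%E.
Proof.
move=> [Lx0_le Lz0_ge] Lfin; have [x0d z0d] := lagr_fin_num_edom Lfin.
rewrite -(fineK Lfin); split.
  by apply: (primal_obj_le_of_lagr_le z0d x0d) => z; rewrite fineK.
by apply: dual_obj_ge_of_lagr_ge z0d _ => x; rewrite fineK.
Qed.

Lemma optimal_saddle_point x0 z0 xs zs :
  saddle_point x0 z0 -> L x0 z0 \is a fin_num ->
  primal_optimal f h g A xs -> dual_optimal f h g A zs ->
  exists pv : R, [/\ P xs = pv%:E, L xs zs = pv%:E & saddle_point xs zs].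
Proof.
move=> saddle0 Lfin xs_opt zs_opt.
have [Px0 Dz0] := saddle_point_duality saddle0 Lfin.
have PD : (P xs <= D zs)%E.
  by apply: le_trans (xs_opt x0) _; apply: le_trans Px0 _; exact: le_trans Dz0 (zs_opt z0).
have LP : L xs zs = P xs.
  by apply/eqP; rewrite eq_le lagr_le_primal_obj (le_trans PD) ?dual_obj_le_lagr.
have LD : L xs zs = D zs by apply/eqP; rewrite eq_le dual_obj_le_lagr andbT LP.
have Pfin : P xs \is a fin_num.
  rewrite fin_numElt -[X in (_ < X)%E]LP LD (lt_le_trans _ (zs_opt z0)) /=.
    by apply: le_lt_trans (xs_opt x0) _; apply: le_lt_trans Px0 _; rewrite -(fineK Lfin) ltry.
  by apply: lt_le_trans Dz0; rewrite -(fineK Lfin) ltNyr.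
exists (fine (P xs)); rewrite fineK // -LP; split=> //; split=> [z|x].
  by rewrite LP lagr_le_primal_obj.
by rewrite LD dual_obj_le_lagr.
Qed.

Lemma lagr_concave x z1 z2 (a b t : R) : edom (fph f h) x ->
  (a%:E <= L x z1)%E -> (b%:E <= L x z2)%E -> 0 <= t <= 1 ->
  ((t * a + (1 - t) * b)%:E <= L x (t *: z1 + (1 - t) *: z2))%E.
Proof.
move=> xd aL1 bL2 t01.
have zd z c : (c%:E <= L x z)%E -> edom (conj g) z.
  by move=> cL; apply: contrapT => zd; move: cL; rewrite lagr_notin_edom_z.
have z1d := zd _ _ aL1; have z2d := zd _ _ bL2.
have conj_zt : (conj g (t *: z1 + (1 - t) *: z2)%R <=
    (t * G z1 + (1 - t) * G z2)%:E)%E.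
  by apply: conj_econvex; rewrite // conjgE.
have ztd : edom (conj g) (t *: z1 + (1 - t) *: z2).
  by apply: le_lt_trans conj_zt _; exact: ltry.
move: aL1 bL2 conj_zt; rewrite !lagrE // (conjgE ztd) /= !lee_fin dotvDl !dotvZl.
by case/andP: t01 => t0 t1; nra.
Qed.

Lemma lagr_convex x1 x2 z (a b t : R) :
  edom (conj g) z -> (L x1 z <= a%:E)%E -> (L x2 z <= b%:E)%E -> 0 <= t <= 1 ->
  (L (t *: x1 + (1 - t) *: x2) z <= (t * a + (1 - t) * b)%:E)%E.
Proof.
move=> zd L1a L2b t01.
have xd x c : (L x z <= c%:E)%E -> edom (fph f h) x.
  by move=> Lc; apply: contrapT => xd; move: Lc; rewrite lagr_notin_edom_x.
have x1d := xd _ _ L1a; have x2d := xd _ _ L2b.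
have fh_fin x : edom (fph f h) x -> f x \is a fin_num /\ h x \is a fin_num.
  by move=> xd'; apply/andP; rewrite -fin_numD fin_numElt fh_gtNy.
have [f1 h1] := fh_fin _ x1d; have [f2 h2] := fh_fin _ x2d.
have fh_xt : (fph f h (t *: x1 + (1 - t) *: x2)%R <=
    (t * F x1 + (1 - t) * F x2)%:E)%E.
  rewrite /fph !fineD // !mulrDr addrACA EFinD.
  apply: leeD; [apply: fcv | apply: hcv]; rewrite ?fineK //.
have xtd : edom (fph f h) (t *: x1 + (1 - t) *: x2).
  by apply: le_lt_trans fh_xt _; exact: ltry.
move: L1a L2b fh_xt; rewrite !lagrE // (fphE xtd) !lee_fin.
rewrite mulmxDr -!scalemxAr dotvDr !dotvZr.
by case/andP: t01 => t0 t1; nra.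
Qed.

Lemma saddle_point_le_sup (Z : set 'cV[R]_m) x xs zs : Z zs -> saddle_point xs zs ->
  (L xs zs <= ereal_sup [set L x z | z in Z])%E.
Proof. by move=> Zzs [_ Lzs_ge]; apply: le_trans (Lzs_ge x) (ereal_sup_ubound _); exists zs. Qed.

Lemma inf_le_saddle_point (X : set 'cV[R]_n) z xs zs : X xs -> saddle_point xs zs ->
  (ereal_inf [set L x z | x in X] <= L xs zs)%E.
Proof. by move=> Xxs [Lxs_le _]; apply: le_trans (ereal_inf_lbound _) (Lxs_le z); exists xs. Qed.

Lemma lagr_le_of_local_max (Z : set 'cV[R]_m) x zs (pv : R) :
  edom (fph f h) x -> nbhs zs Z -> (pv%:E <= L x zs)%E ->
  (forall z, Z z -> (L x z <= pv%:E)%E) -> forall z, (L x z <= pv%:E)%E.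
Proof.
move=> xd Zzs pvL LZ z; rewrite leNgt; apply/negP => pvLz.
have zd : edom (conj g) z.
  by apply: contrapT => zd; move: pvLz; rewrite lagr_notin_edom_z.
have [t [t0 t1 Zzt]] := nbhs_segment Zzs z.
have aL : ((F x + dotv z (A *m x) - G z)%:E <= L x z)%E by rewrite lagrE.
have := le_trans (lagr_concave xd aL pvL _) (LZ _ Zzt).
rewrite ltW //= t1 lee_fin; move: pvLz; rewrite lagrE // lte_fin; nra.
Qed.

Lemma lagr_ge_of_local_min (X : set 'cV[R]_n) xs z (pv : R) :
  edom (conj g) z -> nbhs xs X -> (L xs z <= pv%:E)%E ->
  (forall x, X x -> (pv%:E <= L x z)%E) -> forall x, (pv%:E <= L x z)%E.
Proof.
move=> zd Xxs Lpv LX x; rewrite leNgt; apply/negP => Lxpv.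
have xd : edom (fph f h) x.
  by apply: contrapT => xd; move: Lxpv; rewrite lagr_notin_edom_x.
have [t [t0 t1 Xxt]] := nbhs_segment Xxs x.
have La : (L x z <= (F x + dotv z (A *m x) - G z)%:E)%E by rewrite lagrE.
have := le_trans (LX _ Xxt) (lagr_convex zd La Lpv _).
rewrite ltW //= t1 lee_fin; move: Lxpv; rewrite lagrE // lte_fin; nra.
Qed.

End LagrangianDuality.

Lemma sube_sandwich (R : realType) (S I : \bar R) (p : R) :
  (p%:E <= S)%E -> (I <= p%:E)%E ->
  (0 <= S - I)%E /\ ((S - I)%E = 0 -> S = p%:E /\ I = p%:E).
Proof.
move=> pS Ip; split; first by have := leeB pS Ip; rewrite -EFinB subrr.
case: S pS => [s| |]; case: I Ip => [i| |] //=; rewrite !lee_fin => ip ps.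
by move=> /eqP; rewrite -EFinB eqe subr_eq0 => /eqP si; split; congr EFin; lra.
Qed.

Unset Implicit Arguments.

Theorem mainTheorem1 (R : realType) (n m : nat)
  (f h : 'cV[R]_n -> \bar R) (g : 'cV[R]_m -> \bar R) (A : 'M[R]_(m, n))
  (X : set 'cV[R]_n) (Z : set 'cV[R]_m) (xs : 'cV[R]_n) (zs : 'cV[R]_m) :
  eclosed f -> econvex f -> eclosed g -> econvex g -> eclosed h -> econvex h ->
  open (edom h) -> convex_setv (edom h) ->
  (forall x, edom h x -> differentiable (fun y => fine (h y)) x) ->
  eproper (fph f h) -> eproper g ->
  (* standing assumption: the primal-dual optimality conditions have a solution *)
  (exists (x0 : 'cV[R]_n) (z0 : 'cV[R]_m) (v gr : 'cV[R]_n),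
      subgrad f x0 v /\ is_gradient h x0 gr /\ v + gr + A^T *m z0 = 0 /\
      subgrad (conj g) z0 (A *m x0)) ->
  compact X -> convex_setv X -> compact Z -> convex_setv Z ->
  interior X xs -> primal_optimal f h g A xs ->
  interior Z zs -> dual_optimal f h g A zs ->
  forall x z, edom (fph f h) x -> edom (conj g) z ->
    (0 <= pdgap f h g A X Z x z)%E /\
    (pdgap f h g A X Z x z = 0%E -> primal_optimal f h g A x /\ dual_optimal f h g A z).
Proof.
move=> _ fcv gcl gcv _ hcv _ _ _ fh_proper g_proper
  [x0 [z0 [v [gr [fv [hgr [kkt z0_sub]]]]]]] _ _ _ _ xsX xs_opt zsZ zs_opt x z xd zd.
have [saddle0 fin0] := kkt_saddle_point fh_proper g_proper hcv fv hgr kkt z0_sub.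
have [pv [Pxs Lxszs saddle]] :=
  optimal_saddle_point fh_proper g_proper gcl gcv saddle0 fin0 xs_opt zs_opt.
have sup_ge := saddle_point_le_sup x (nbhs_singleton zsZ) saddle.
have inf_le := inf_le_saddle_point z (nbhs_singleton xsX) saddle.
rewrite Lxszs in sup_ge inf_le; have [gap_ge0 gap_eq0] := sube_sandwich sup_ge inf_le.
have [Lxs_le Lzs_ge] := saddle.
split=> // /gap_eq0[supE infE].
have Lx_le : forall z', (lagr f h g A x z' <= pv%:E)%E.
  apply: (lagr_le_of_local_max fh_proper g_proper xd zsZ) => [|z' Zz'].
    by rewrite -Lxszs; exact: Lzs_ge.
  by rewrite -supE; apply: ereal_sup_ubound; exists z'.
have Lz_ge : forall x', (pv%:E <= lagr f h g A x' z)%E.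
  apply: (lagr_ge_of_local_min fh_proper g_proper fcv hcv zd xsX) => [|x' Xx'].
    by rewrite -Lxszs; exact: Lxs_le.
  by rewrite -infE; apply: ereal_inf_lbound; exists x'.
split=> [x'|z'].
  apply: le_trans (xs_opt x'); rewrite Pxs.
  by apply: (primal_obj_le_of_lagr_le fh_proper g_proper gcl gcv (subgrad_edom z0_sub) xd).
apply: le_trans (dual_obj_ge_of_lagr_ge fh_proper g_proper zd Lz_ge).
by rewrite -Lxszs; apply: le_trans (dual_obj_le_lagr A fh_proper g_proper xs z') (Lxs_le z').
Qed.
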